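(* There exists a unique $\delta_\beta\in(0,b)$ with $\varphi(\delta_\beta)=\beta N$; moreover $\varphi(\delta)>\beta N$ for $\delta\in(0,\delta_\beta)$ and $\varphi(\delta)<\beta N$ for $\delta\in(\delta_\beta,b)$. The function $G$ is strictly increasing on $(0,\delta_\beta]$; consequently every maximizer $\delta^\ast$ of $G$ over $(0,b)$ satisfies $\delta^\ast\ge\delta_\beta$.
   Context: Parameters: $N>0$, $\sigma>0$, $b>0$, $\beta>0$. $\Phi$ and $\phi$ denote the standard normal cdf and pdf. For $\delta\in(0,b)$ let $q(\delta)=\frac{e^{b-\delta}-1}{e^b-1}\in(0,1)$ and $\varphi(\delta)=N\exp\!\left[\sigma\,\Phi^{-1}(q(\delta))-\delta-\frac{\sigma^2}{2}\right]$ (the vault's unconstrained optimal stablecoin issuance at interest rate $\delta$). Let $F^\ast(\delta)=\min(\varphi(\delta),\beta N)$ and define the governance objective $G(\delta)=F^\ast(\delta)(e^\delta-1)$ for $\delta\in(0,b)$. *)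

From HB Require Import structures.
From mathcomp Require Import all_boot all_order all_algebra.
From mathcomp Require Import all_classical all_reals all_analysis.
Set Implicit Arguments. Unset Strict Implicit. Unset Printing Implicit Defensive.
Import Order.TTheory GRing.Theory Num.Theory.
Local Open Scope classical_set_scope.
Local Open Scope ring_scope.

Definition std_normal_pdf {R : realType} (x : R) : R := normal_pdf 0 1 x.

Definition Phi {R : realType} (x : R) : R :=
  fine (normal_prob 0 1 `]-oo, x]).

(* quantile function Phi^{-1}: the (unique, since Phi is a bijection
   R -> (0,1)) x with Phi x = q; chosen by xget. *)
Definition Phi_inv {R : realType} (q : R) : R :=
  xget 0 [set x | Phi x = q].

Definition qfun {R : realType} (b d : R) : R :=
  (expR (b - d) - 1) / (expR b - 1).

Definition varphi {R : realType} (N sigma b d : R) : R :=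
  N * expR (sigma * Phi_inv (qfun b d) - d - sigma ^+ 2 / 2).

Definition Fstar {R : realType} (N sigma b beta d : R) : R :=
  Num.min (varphi N sigma b d) (beta * N).

Definition Gobj {R : realType} (N sigma b beta d : R) : R :=
  Fstar N sigma b beta d * (expR d - 1).

From HB Require Import structures.
From mathcomp Require Import all_boot all_order all_algebra.
From mathcomp Require Import all_classical all_reals all_analysis.
From mathcomp Require Import ring lra measurable_realfun.
Import Order.TTheory GRing.Theory Num.Theory.
Set Implicit Arguments. Unset Strict Implicit.
Import numFieldNormedType.Exports.
Local Open Scope ring_scope.
Local Open Scope classical_set_scope.

(* Write E = e^b - 1.
   1. The standard normal cdf Phi is a continuous strictly increasing bijection
      from R onto (0,1).  The normal mass of ]x,y] lies between
      c(x,y) (y - x) and (y - x)/sqrt(2 pi) with c(x,y) > 0, which gives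
      strict monotonicity and Lipschitz continuity; continuity of the measure
      along monotone sequences of half-lines gives the limits 0 and 1, and the
      intermediate value theorem gives surjectivity.  So Phi_inv is a genuine
      inverse on (0,1), strictly increasing there.
   2. q maps (0,b) into (0,1) and is strictly decreasing, hence varphi is
      strictly decreasing on (0,b).  This yields uniqueness of delta_beta and
      the sign of varphi - beta N on each side of it.
   3. Existence: parametrise delta by its quantile x = Phi^{-1}(q(delta)),
      i.e. delta(x) = b - ln(1 + E Phi x) in (0,b).  Then
      varphi(delta(x)) = N e^{-b} h(x) with h(x) = exp(sigma x - sigma^2/2)(1 + E Phi x)
      continuous on R, below beta e^b far left and above it far right.
   4. On (0, delta_beta] the cap is inactive, F* = beta N, so
      G = beta N (e^delta - 1) is strictly increasing there; hence no point
      below delta_beta can maximise G. *)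

Section StandardNormalCdf.
Variable R : realType.
Local Notation P := (@normal_prob R 0 1).
Local Notation mu := (@lebesgue_measure R).

Lemma normal_prob_fineK (A : set R) : measurable A -> P A = (fine (P A))%:E.
Proof. by move=> mA; rewrite fineK // fin_num_measure. Qed.

Lemma Phi_increment (x y : R) : x < y -> Phi y - Phi x = fine (P `]x, y]).
Proof.
move=> xy; rewrite /Phi (@itv_bndbnd_setU _ _ _ (BRight x)); last 2 first.
- by rewrite bnd_simp.
- by rewrite bnd_simp ltW.
rewrite measureU //; last first.
  apply/seteqP; split => t //= []; rewrite /= !in_itv /= => tx /andP[xt _].
  by move: (lt_le_trans xt tx); rewrite ltxx.
by rewrite fineD ?fin_num_measure // addrC addKr.
Qed.

Lemma measurable_normal_pdf_on (D : set R) : measurable D ->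
  measurable_fun D (fun t : R => (normal_pdf 0 1 t)%:E).
Proof.
move=> mD; apply/measurable_EFinP; apply: measurable_funTS.
exact: measurable_normal_pdf.
Qed.

(* The normal mass of ]x,y] integrates a constant lower/upper bound of the
   density: the peak above, and peak * exp(-(x^2+y^2)/2) below. *)
Lemma normal_prob_itv_ub (x y : R) : x < y ->
  (P `]x, y] <= (normal_peak 1 * (y - x))%:E)%E.
Proof.
move=> xy; apply: (@le_trans _ _ (\int[mu]_(t in `]x, y]) (normal_peak 1)%:E)%E).
  apply: ge0_le_integral => //=.
  - by move=> t _; rewrite lee_fin normal_pdf_ge0.
  - exact: measurable_normal_pdf_on.
  - by move=> t _; rewrite lee_fin normal_pdf_ub ?oner_neq0.
by rewrite integral_cst //= lebesgue_measure_itv /= lte_fin xy -EFinM.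
Qed.

Lemma normal_prob_itv_lb (x y : R) : x < y ->
  ((normal_peak 1 * expR (- (x ^+ 2 + y ^+ 2) / 2) * (y - x))%:E <= P `]x, y])%E.
Proof.
move=> xy; apply: (@le_trans _ _ (\int[mu]_(t in `]x, y])
   (normal_peak 1 * expR (- (x ^+ 2 + y ^+ 2) / 2))%:E)%E).
  by rewrite integral_cst //= lebesgue_measure_itv /= lte_fin xy -EFinM.
apply: ge0_le_integral => //=.
- by move=> t _; rewrite lee_fin mulr_ge0 ?normal_peak_ge0 ?expR_ge0.
- exact: measurable_normal_pdf_on.
move=> t; rewrite /= in_itv /= => /andP[xt ty].
rewrite lee_fin normal_pdfE ?oner_neq0 //= /normal_fun subr0 expr1n.
rewrite ler_wpM2l ?normal_peak_ge0 // ler_expR.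
have sq_le : t ^+ 2 <= x ^+ 2 + y ^+ 2.
  have txy : 0 <= (t - x) * (y - t) by rewrite mulr_ge0 // subr_ge0 // ltW.
  have [s0|s0] := leP 0 (x + y).
    have : 0 <= (y - t) * (x + y) by rewrite mulr_ge0 // subr_ge0.
    nra.
  have : 0 <= (t - x) * (- (x + y)) by rewrite mulr_ge0 // ?subr_ge0 ?oppr_ge0 ?ltW.
  nra.
lra.
Qed.

Lemma Phi_increment_ub (x y : R) : x < y -> Phi y - Phi x <= normal_peak 1 * (y - x).
Proof.
move=> xy; rewrite Phi_increment // -lee_fin -normal_prob_fineK //.
exact: normal_prob_itv_ub.
Qed.

(* Phi is strictly increasing, because the density is bounded below on ]x,y]. *)
Lemma Phi_lt (x y : R) : x < y -> Phi x < Phi y.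
Proof.
move=> xy; rewrite -subr_gt0 Phi_increment //.
rewrite -lte_fin -normal_prob_fineK //; apply: lt_le_trans (normal_prob_itv_lb xy).
by rewrite lte_fin !mulr_gt0 ?subr_gt0 ?expR_gt0 ?normal_peak_gt0 ?oner_neq0.
Qed.

Lemma Phi_le (x y : R) : x <= y -> Phi x <= Phi y.
Proof. by rewrite le_eqVlt => /orP[/eqP->//|/Phi_lt/ltW]. Qed.

Lemma Phi_inj : injective (@Phi R).
Proof.
move=> x y e; have [xy|yx|//] := ltgtP x y.
- by have := Phi_lt xy; rewrite e ltxx.
- by have := Phi_lt yx; rewrite e ltxx.
Qed.

Lemma Phi_lipschitz (x t : R) : `|Phi x - Phi t| <= normal_peak 1 * `|x - t|.
Proof.
have [xt|tx|->] := ltgtP x t; last by rewrite !subrr normr0 mulr0.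
- rewrite distrC (distrC x) !gtr0_norm ?subr_gt0 ?Phi_lt //.
  exact: Phi_increment_ub.
- by rewrite !gtr0_norm ?subr_gt0 ?Phi_lt //; exact: Phi_increment_ub.
Qed.

Lemma Phi_continuous : continuous (@Phi R : R -> R).
Proof.
move=> x; apply/cvgrPdist_lt => e e0.
have L0 : 0 < normal_peak 1 + 1 :> R by rewrite ltr_wpDl ?normal_peak_ge0.
apply/nbhs_ballP; exists (e / (normal_peak 1 + 1)) => /=; first by rewrite divr_gt0.
move=> t; rewrite /ball /= => hxt; apply: le_lt_trans (Phi_lipschitz x t) _.
have : `|x - t| * (normal_peak 1 + 1) < e by rewrite -ltr_pdivlMr.
by have := normal_peak_ge0 (1:R); have := normr_ge0 (x - t); nra.
Qed.

Lemma Phi_ge0 (x : R) : 0 <= Phi x.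
Proof. by rewrite /Phi fine_ge0 // measure_ge0. Qed.

Lemma Phi_le1 (x : R) : Phi x <= 1.
Proof. by rewrite -lee_fin -normal_prob_fineK //; exact: probability_le1. Qed.

Lemma Phi_gt0 (x : R) : 0 < Phi x.
Proof. by apply: le_lt_trans (Phi_ge0 (x - 1)) (Phi_lt _); rewrite gtrBl. Qed.

Lemma Phi_lt1 (x : R) : Phi x < 1.
Proof. by apply: lt_le_trans (Phi_lt _) (Phi_le1 (x + 1)); rewrite ltrDl. Qed.

(* Phi takes values arbitrarily close to 0: the half-lines ]-oo,-n] decrease
   to the empty set, so their normal masses tend to 0. *)
Lemma Phi_small (q : R) : 0 < q -> exists x, Phi x < q.
Proof.
move=> q0; pose F n := `]-oo, - (n%:R : R)].
have mF i : measurable (F i) by exact: measurable_itv.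
have F0 : \bigcap_n F n = set0.
  apply/seteqP; split => t //= Ft.
  have := Ft (Num.bound `|t|) I; rewrite /F /= in_itv /= => tn.
  have := archi_boundP (normr_ge0 t); have := ler_norm (- t).
  by rewrite normrN; lra.
have F_nonincr : nonincreasing_seq F.
  by move=> m n mn; apply/subsetPset/subset_itvl; rewrite bnd_simp lerN2 ler_nat.
have F0_fin : (P (F 0%N) < +oo)%E by rewrite normal_prob_fineK // ltry.
have := nonincreasing_cvg_mu (mu := P) F0_fin mF (bigcapT_measurable mF) F_nonincr.
rewrite F0 measure0 => /fine_cvg /cvgr_lt /(_ q q0) [n _ Fn].
by exists (- n%:R); exact: Fn n (leqnn n).
Qed.

(* Symmetrically, the half-lines ]-oo,n] increase to R, of mass 1. *)
Lemma Phi_big (q : R) : q < 1 -> exists x, q < Phi x.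
Proof.
move=> q1; pose F n := `]-oo, (n%:R : R)].
have mF i : measurable (F i) by exact: measurable_itv.
have FT : \bigcup_n F n = setT.
  apply/seteqP; split => t //= _; exists (Num.bound `|t|) => //.
  rewrite /F /= in_itv /=.
  by have := archi_boundP (normr_ge0 t); have := ler_norm t; lra.
have F_nondecr : nondecreasing_seq F.
  by move=> m n mn; apply/subsetPset/subset_itvl; rewrite bnd_simp ler_nat.
have : (P \o F) n @[n --> \oo] --> (1:R)%:E.
  rewrite -(probability_setT P) -FT.
  exact: (nondecreasing_cvg_mu (mu := P) mF (bigcupT_measurable F mF) F_nondecr).
move=> /fine_cvg /cvgr_gt /(_ q q1) [n _ Fn].
by exists n%:R; exact: Fn n (leqnn n).
Qed.

(* By the intermediate value theorem, Phi maps R onto (0,1). *)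
Lemma Phi_surj (q : R) : 0 < q < 1 -> exists x, Phi x = q.
Proof.
move=> /andP[q0 q1]; have [x1 h1] := Phi_small q0; have [x2 h2] := Phi_big q1.
have x12 : x1 <= x2 by rewrite leNgt; apply/negP => /Phi_lt; lra.
have := @IVT R (@Phi R) x1 x2 q x12 (continuous_subspaceT Phi_continuous).
rewrite ge_min le_max (ltW h1) (ltW h2) orbT => /(_ isT) [c _ hc].
by exists c.
Qed.

Lemma Phi_invK (q : R) : 0 < q < 1 -> Phi (Phi_inv q) = q.
Proof. by move=> hq; apply: (xgetPex 0 (Phi_surj hq)). Qed.

Lemma PhiK (x : R) : Phi_inv (Phi x) = x.
Proof. by apply: Phi_inj; rewrite Phi_invK // Phi_gt0 Phi_lt1. Qed.

Lemma Phi_inv_lt (q1 q2 : R) : 0 < q1 < 1 -> 0 < q2 < 1 -> q1 < q2 ->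
  Phi_inv q1 < Phi_inv q2.
Proof.
move=> h1 h2 q12; rewrite ltNge; apply/negP => /Phi_le.
by rewrite !Phi_invK //; lra.
Qed.

End StandardNormalCdf.

Section RateQuantile.
Variables (R : realType) (b : R).
Hypothesis hb : 0 < b.
Local Notation E := (expR b - 1).

Lemma expRm1_gt0 : 0 < E.
Proof. by rewrite subr_gt0 expR_gt1. Qed.

Lemma qfun_in (d : R) : 0 < d < b -> 0 < qfun b d < 1.
Proof.
move=> /andP[d0 db]; rewrite /qfun divr_gt0 ?expRm1_gt0 ?subr_gt0 ?expR_gt1 ?subr_gt0 //=.
by rewrite ltr_pdivrMr ?expRm1_gt0 // mul1r ltrD2r ltr_expR; lra.
Qed.

Lemma qfun_lt (d1 d2 : R) : d1 < d2 -> qfun b d2 < qfun b d1.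
Proof. by move=> d12; rewrite ltr_pM2r ?invr_gt0 ?expRm1_gt0 // ltrD2r ltr_expR; lra. Qed.

(* The value 1 + E Phi(x) = e^(b - delta) lies strictly between 1 and e^b. *)
Lemma quantile_factor_gt1 (x : R) : 1 < 1 + Phi x * E.
Proof. by rewrite ltrDl mulr_gt0 ?Phi_gt0 ?expRm1_gt0. Qed.

Lemma quantile_factor_lt (x : R) : 1 + Phi x * E < expR b.
Proof.
rewrite -ltrBrDl -[ltRHS]mul1r ltr_pM2r ?expRm1_gt0 //; exact: Phi_lt1.
Qed.

(* The rate whose q-value is the probability level Phi x. *)
Definition quantile_rate (x : R) : R := b - ln (1 + Phi x * E).

Lemma quantile_rate_in (x : R) : 0 < quantile_rate x < b.
Proof.
have f0 : 0 < 1 + Phi x * E by apply: lt_trans (quantile_factor_gt1 x).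
rewrite /quantile_rate subr_gt0 gtrBl ln_gt0 ?quantile_factor_gt1 //=.
by rewrite -ltr_expR lnK ?posrE ?quantile_factor_lt.
Qed.

Lemma expR_quantile_rate (x : R) : expR (b - quantile_rate x) = 1 + Phi x * E.
Proof.
rewrite /quantile_rate opprB addrCA subrr addr0 lnK // posrE.
exact: lt_trans (quantile_factor_gt1 x).
Qed.

Lemma Phi_inv_qfun_quantile_rate (x : R) : Phi_inv (qfun b (quantile_rate x)) = x.
Proof.
rewrite /qfun expR_quantile_rate addrC addKr mulfK ?PhiK //.
by rewrite gt_eqF ?expRm1_gt0.
Qed.

End RateQuantile.

Section VaultIssuance.
Variables (R : realType) (N sigma b : R).
Hypotheses (hN : 0 < N) (hsigma : 0 < sigma) (hb : 0 < b).
Local Notation E := (expR b - 1).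

(* The optimal issuance is strictly decreasing in the interest rate, since
   Phi_inv is increasing and q is decreasing. *)
Lemma varphi_lt (d1 d2 : R) : 0 < d1 -> d1 < d2 -> d2 < b ->
  varphi N sigma b d2 < varphi N sigma b d1.
Proof.
move=> d10 d12 d2b.
have d1_in : 0 < d1 < b by apply/andP; split; lra.
have d2_in : 0 < d2 < b by apply/andP; split; lra.
have := Phi_inv_lt (qfun_in hb d2_in) (qfun_in hb d1_in) (qfun_lt hb d12).
rewrite /varphi ltr_pM2l // ltr_expR -(ltr_pM2l hsigma); lra.
Qed.

(* varphi along the parametrisation delta = quantile_rate x, up to the
   constant N e^(-b). *)
Definition quantile_profile (x : R) : R :=
  expR (sigma * x - sigma ^+ 2 / 2) * (1 + Phi x * E).

Lemma varphi_quantile_rate (x : R) :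
  varphi N sigma b (quantile_rate b x) = N * expR (- b) * quantile_profile x.
Proof.
rewrite /varphi /quantile_profile (Phi_inv_qfun_quantile_rate hb).
rewrite -(expR_quantile_rate hb x) -mulrA -!expRD; congr (_ * expR _).
ring.
Qed.

Lemma quantile_profile_continuous : continuous quantile_profile.
Proof.
move=> x; apply: cvgM.
  apply: (@continuous_comp _ _ _ (fun y : R => sigma * y - sigma ^+ 2 / 2) expR).
    by apply: cvgB; [apply: cvgM; [exact: cvg_cst | exact: cvg_id] | exact: cvg_cst].
  exact: continuous_expR.
by apply: cvgD; [exact: cvg_cst | apply: cvgM; [exact: Phi_continuous | exact: cvg_cst]].
Qed.

(* The profile is strictly increasing, as a product of two positive
   increasing functions. *)
Lemma quantile_profile_lt (x y : R) : x < y -> quantile_profile x < quantile_profile y.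
Proof.
move=> xy; rewrite /quantile_profile ltr_pM ?expR_ge0 //.
- by apply: le_trans (ltW (quantile_factor_gt1 hb x)).
- by rewrite ltr_expR ltrD2r ltr_pM2l.
- by rewrite ltrD2l ltr_pM2r ?expRm1_gt0 ?Phi_lt.
Qed.

Lemma affine_exponent_surj (y : R) : exists x, sigma * x - sigma ^+ 2 / 2 = y.
Proof.
by exists ((y + sigma ^+ 2 / 2) / sigma); field; rewrite gt_eqF.
Qed.

Lemma quantile_profile_small (c : R) : 0 < c -> exists x, quantile_profile x < c.
Proof.
move=> c0; have [x ex] := affine_exponent_surj (ln c - b).
exists x; rewrite /quantile_profile ex expRD lnK ?posrE // -mulrA.
rewrite gtr_pMr // expRN ltr_pdivrMl ?expR_gt0 // mulr1.
exact: quantile_factor_lt.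
Qed.

Lemma quantile_profile_big (c : R) : 0 < c -> exists x, c < quantile_profile x.
Proof.
move=> c0; have [x ex] := affine_exponent_surj (ln c).
exists x; rewrite /quantile_profile ex lnK ?posrE //.
by rewrite ltr_pMr ?quantile_factor_gt1.
Qed.

Lemma varphi_root (beta : R) : 0 < beta ->
  exists2 db, 0 < db < b & varphi N sigma b db = beta * N.
Proof.
move=> hbeta; pose c := beta * expR b.
have c0 : 0 < c by rewrite mulr_gt0 ?expR_gt0.
have [x1 h1] := quantile_profile_small c0.
have [x2 h2] := quantile_profile_big c0.
have x12 : x1 <= x2.
  by rewrite leNgt; apply/negP => /quantile_profile_lt; lra.
have := @IVT R quantile_profile x1 x2 c x12
  (continuous_subspaceT quantile_profile_continuous).
rewrite ge_min le_max (ltW h1) (ltW h2) orbT => /(_ isT) [x _ hx].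
exists (quantile_rate b x); first exact: quantile_rate_in.
rewrite varphi_quantile_rate hx /c expRN.
by field; rewrite gt_eqF ?expR_gt0.
Qed.

End VaultIssuance.

Lemma Gobj_uncapped (R : realType) (N sigma b beta d : R) :
  beta * N <= varphi N sigma b d ->
  Gobj N sigma b beta d = beta * N * (expR d - 1).
Proof. by move=> capped; rewrite /Gobj /Fstar min_r. Qed.

Theorem proposition2 (R : realType) (N sigma b beta : R)
  (hN : 0 < N) (hsigma : 0 < sigma) (hb : 0 < b) (hbeta : 0 < beta) :
  exists db : R,
    [/\ 0 < db < b,
        varphi N sigma b db = beta * N &
        (forall d : R, 0 < d < b -> varphi N sigma b d = beta * N -> d = db)] /\
    [/\
        (forall d : R, 0 < d < db -> varphi N sigma b d > beta * N),
        (forall d : R, db < d < b -> varphi N sigma b d < beta * N),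
        (forall d1 d2 : R, 0 < d1 -> d1 < d2 -> d2 <= db ->
           Gobj N sigma b beta d1 < Gobj N sigma b beta d2) &
        (forall dstar : R, 0 < dstar < b ->
           (forall d : R, 0 < d < b ->
              Gobj N sigma b beta d <= Gobj N sigma b beta dstar) ->
           db <= dstar)].
Proof.
have [db db_in root] := varphi_root N hsigma hb hbeta.
move/andP: (db_in) => [db0 dbb].
have above d : 0 < d < db -> beta * N < varphi N sigma b d.
  by move=> /andP[d0 ddb]; rewrite -root varphi_lt.
have below d : db < d < b -> varphi N sigma b d < beta * N.
  by move=> /andP[dbd db']; rewrite -root varphi_lt.
have uncapped d : 0 < d -> d <= db -> beta * N <= varphi N sigma b d.
  move=> d0; rewrite le_eqVlt => /orP[/eqP->|ddb]; first by rewrite root.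
  by apply/ltW/above; rewrite d0.
have G_incr d1 d2 : 0 < d1 -> d1 < d2 -> d2 <= db ->
    Gobj N sigma b beta d1 < Gobj N sigma b beta d2.
  move=> d10 d12 d2db; have d20 := lt_trans d10 d12.
  rewrite !Gobj_uncapped ?uncapped ?(ltW (lt_le_trans d12 d2db)) //.
  by rewrite ltr_pM2l ?mulr_gt0 // ltrD2r ltr_expR.
exists db; split; split => //.
- move=> d /andP[d0 db'] vd; have [ddb|dbd|//] := ltgtP d db.
  + by have := above d; rewrite d0 ddb vd ltxx => /(_ isT).
  + by have := below d; rewrite dbd db' vd ltxx => /(_ isT).
- move=> ds ds_in ds_max; rewrite leNgt; apply/negP => dsdb.
  have := ds_max db db_in; rewrite leNgt G_incr //.
  by case/andP: ds_in.
Qed.
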